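(* Let $\dot G\in\mathcal C_1\cup\mathcal C_4\cup\mathcal C_5$ be a connected, non-complete, $5$-regular and $1$ net-regular SRSG with parameters $(n,5,a,b,c)$. If $(a,b)=(2,0)$, then $4\mid n$.
   Context: A signed graph $\dot G=(G,\sigma)$ is a simple graph $G$ with $\sigma:E(G)\to\{\pm1\}$; adjacency matrix $A_{\dot G}$ has entries $\sigma(v_iv_j)$ for adjacent vertices and $0$ otherwise. Degree and connectedness refer to $G$; net-degree is $d^+(v)-d^-(v)$; $\rho$ net-regular means all net-degrees equal $\rho$. $\dot G$ on $n$ vertices is an SRSG if it is neither homogeneous complete nor edgeless and there are $r\in\mathbb N$, $a,b,c\in\mathbb Z$ with $(A^2_{\dot G})_{ii}=r$, $(A^2_{\dot G})_{ij}=a$ for positive edges, $b$ for negative edges, $c$ for distinct non-adjacent pairs; parameters $(n,r,a,b,c)$. Classes: $\mathcal C_1$: $a=-b$ and (complete, or non-complete with $c\neq0$); $\mathcal C_4$: $a\ne-b$, non-complete, $c=0$; $\mathcal C_5$: $a\neq-b$, non-complete, $c\notin\{0,\frac{a+b}{2}\}$. *)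

From HB Require Import structures.
From mathcomp Require Import all_boot all_order all_algebra.
Set Implicit Arguments. Unset Strict Implicit. Unset Printing Implicit Defensive.
Import Order.TTheory GRing.Theory Num.Theory.
Local Open Scope ring_scope.

(* A signed graph on the finite vertex type T is given by its (signed)
   adjacency matrix A : T -> T -> int, with entries in {-1,0,1},
   symmetric and with zero diagonal.  u,v adjacent iff A u v != 0;
   the edge is positive iff A u v = 1, negative iff A u v = -1. *)
Definition signed_graph (T : finType) (A : T -> T -> int) : Prop :=
  (forall u, A u u = 0) /\ (forall u v, A u v = A v u) /\
  (forall u v, A u v = 0 \/ A u v = 1 \/ A u v = -1).

Definition adj (T : finType) (A : T -> T -> int) (u v : T) : bool := A u v != 0.

Definition sq (T : finType) (A : T -> T -> int) (u v : T) : int :=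
  \sum_(w : T) A u w * A w v.

Definition degree (T : finType) (A : T -> T -> int) (v : T) : nat :=
  #|[set w | adj A v w]|.

Definition net_degree (T : finType) (A : T -> T -> int) (v : T) : int :=
  (#|[set w | A v w == 1]|%:Z - #|[set w | A v w == -1]|%:Z).

Definition regular (T : finType) (A : T -> T -> int) (r : nat) : Prop :=
  forall v, degree A v = r.

Definition net_regular (T : finType) (A : T -> T -> int) (rho : int) : Prop :=
  forall v, net_degree A v = rho.

Definition sg_connected (T : finType) (A : T -> T -> int) : Prop :=
  forall u v, connect (adj A) u v.

Definition complete (T : finType) (A : T -> T -> int) : Prop :=
  forall u v, u != v -> A u v != 0.

Definition edgeless (T : finType) (A : T -> T -> int) : Prop :=
  forall u v, A u v = 0.

Definition homogeneous_complete (T : finType) (A : T -> T -> int) : Prop :=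
  complete A /\
  ((forall u v, u != v -> A u v = 1) \/ (forall u v, u != v -> A u v = -1)).

Definition SRSG (T : finType) (A : T -> T -> int) (n r : nat) (a b c : int)
  : Prop :=
  #|T| = n /\
  ~ homogeneous_complete A /\
  ~ edgeless A /\
  (forall i, sq A i i = r%:Z) /\
  (forall i j, A i j = 1 -> sq A i j = a) /\
  (forall i j, A i j = -1 -> sq A i j = b) /\
  (forall i j, i != j -> A i j = 0 -> sq A i j = c).

Definition class_C1 (T : finType) (A : T -> T -> int) (a b c : int) : Prop :=
  a = - b /\ (complete A \/ (~ complete A /\ c <> 0)).

Definition class_C4 (T : finType) (A : T -> T -> int) (a b c : int) : Prop :=
  a <> - b /\ ~ complete A /\ c = 0.

(* c \notin {0, (a+b)/2}, written without division as 2c <> a+b *)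
Definition class_C5 (T : finType) (A : T -> T -> int) (a b c : int) : Prop :=
  a <> - b /\ ~ complete A /\ c <> 0 /\ 2 * c <> a + b.

From mathcomp Require Import all_boot all_order all_algebra zify.
Import GRing.Theory Num.Theory.
Local Open Scope ring_scope.

(* Fix a vertex i with p positive and m negative neighbours; regularity and
   net-regularity force p = 3 and m = 2.  Counting the row sum of A^2 at i in
   two ways gives 1 = 1 * 1 (every row of A sums to the net degree 1) and
   5 + 2p + c z, where z = n - 6 is the number of non-neighbours of i; hence
   c z = -10, so z divides 10.  The handshake lemma makes 5n, hence z, even,
   so z is 2 or 10 and n is 8 or 16. *)

Lemma sum_indicator (T : finType) (P : pred T) :
  \sum_(j : T) ((P j)%:R : int) = #|[set j | P j]|%:Z.
Proof.
rewrite -sum1dep_card -natz natr_sum [RHS]big_mkcond /=.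
by apply: eq_bigr => j _; case: (P j).
Qed.

Lemma sum_symmetric_double (T : finType) (f : T -> T -> nat) :
  (forall u v, f u v = f v u) -> (forall u, f u u = 0%N) ->
  (\sum_u \sum_v f u v
     = (\sum_u \sum_(v | enum_rank u < enum_rank v) f u v).*2)%N.
Proof.
move=> f_sym f_diag.
have split_row u : (\sum_v f u v = \sum_(v | (enum_rank u < enum_rank v)%N) f u v
                                   + \sum_(v | (enum_rank v < enum_rank u)%N) f u v)%N.
  rewrite (bigID (fun v => (enum_rank u < enum_rank v)%N)) /=; congr (_ + _)%N.
  rewrite (bigD1 u) ?ltnn //= f_diag add0n; apply: eq_bigl => v.
  rewrite -leqNgt leq_eqVlt; have [->|v_ne_u] := eqVneq v u; first by rewrite ltnn eqxx andbF.
  rewrite andbT orb_idl // => /eqP rank_eq.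
  by rewrite (enum_rank_inj (val_inj rank_eq)) eqxx in v_ne_u.
rewrite (eq_bigr _ (fun u _ => split_row u)) big_split /= -addnn; congr (_ + _)%N.
under eq_bigr do rewrite big_mkcond.
rewrite exchange_big /=; apply: eq_bigr => u _.
by rewrite [RHS]big_mkcond; apply: eq_bigr => v _; rewrite f_sym.
Qed.

Lemma four_dvd_of_even_divisor_10 (z : nat) (c : int) :
  c * z%:Z = -10 -> ~~ odd z -> (4 %| z + 6)%N.
Proof.
move=> cz_eq z_even.
have z_dvd : (z %| 10)%N by move: (dvdz_mull c (dvdzz z%:Z)); rewrite cz_eq.
have z_small : (z < 11)%N by rewrite ltnS dvdn_leq.
have /allP small_cases : all (fun k => (k %| 10) ==> ~~ odd k ==> (4 %| k + 6))%N
                           (iota 0 11) by [].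
by move: (small_cases z); rewrite mem_iota z_small z_dvd z_even; apply.
Qed.

Section SignedGraph.

Context {T : finType} (A : T -> T -> int).

Definition pos_degree (v : T) : nat := #|[set w | A v w == 1]|.
Definition neg_degree (v : T) : nat := #|[set w | A v w == -1]|.
Definition non_neighbours (v : T) : {set T} := [set w | (w != v) && (A v w == 0)].

Lemma sum_sq_row (i : T) : \sum_j sq A i j = \sum_w A i w * \sum_j A w j.
Proof. by rewrite /sq exchange_big; apply: eq_bigr => w _; rewrite mulr_sumr. Qed.

Hypothesis sgA : signed_graph A.

Let entry_cases u v : A u v = 0 \/ A u v = 1 \/ A u v = -1.
Proof. by case: sgA => _ []. Qed.

Lemma degree_pos_neg (v : T) : degree A v = (pos_degree v + neg_degree v)%N.
Proof.
rewrite /degree; have -> : [set w | adj A v w] = [set w | A v w == 1] :|: [set w | A v w == -1].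
  by apply/setP => w; rewrite !inE /adj; case: (entry_cases v w) => [|[]] ->.
rewrite cardsU (_ : _ :&: _ = set0) ?cards0 ?subn0 //.
by apply/setP => w; rewrite !inE; case: eqP => // ->.
Qed.

Lemma row_sum_net_degree (v : T) : \sum_w A v w = net_degree A v.
Proof.
rewrite /net_degree -!sum_indicator -sumrB.
by apply: eq_bigr => w _; case: (entry_cases v w) => [|[]] ->.
Qed.

Lemma card_non_neighbours (v : T) : (#|non_neighbours v| + degree A v).+1 = #|T|.
Proof.
have zero_row : [set w | A v w == 0] = ~: [set w | adj A v w].
  by apply/setP => w; rewrite !inE /adj negbK.
rewrite -(cardsC [set w | adj A v w]) -zero_row (cardsD1 v [set w | A v w == 0]).
have -> : [set w | A v w == 0] :\ v = non_neighbours v.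
  by apply/setP => w; rewrite !inE.
by case: sgA => diag_zero _; rewrite inE diag_zero eqxx /degree /=; lia.
Qed.

Lemma sum_sq_net_regular {rho : int} (i : T) :
  net_regular A rho -> \sum_j sq A i j = rho * rho.
Proof.
move=> net_reg; rewrite sum_sq_row.
under eq_bigr do rewrite row_sum_net_degree net_reg.
by rewrite -mulr_suml row_sum_net_degree net_reg.
Qed.

Lemma handshake {r : nat} : regular A r -> ~~ odd (r * #|T|).
Proof.
case: sgA => diag_zero [sym _] reg.
have -> : (r * #|T| = \sum_u \sum_v adj A u v)%N.
  rewrite mulnC -sum_nat_const; apply: eq_bigr => u _.
  by rewrite -(reg u) /degree -sum1dep_card big_mkcond; apply: eq_bigr => v _; case: ifP.
rewrite sum_symmetric_double ?odd_double // => [u v|u].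
- by rewrite /adj sym.
- by rewrite /adj diag_zero.
Qed.

Lemma sum_sq_row_SRSG {n r : nat} {a b c : int} (i : T) :
  SRSG A n r a b c ->
  \sum_j sq A i j = r%:Z + a * (pos_degree i)%:Z + b * (neg_degree i)%:Z
                    + c * #|non_neighbours i|%:Z.
Proof.
case=> _ [_ [_ [sq_diag [sq_pos [sq_neg sq_non]]]]].
have sq_row j : sq A i j = r%:Z * (j == i)%:R + a * (A i j == 1)%:R
                           + b * (A i j == -1)%:R + c * ((j != i) && (A i j == 0))%:R.
  have [->|j_ne_i] := eqVneq j i.
    by case: sgA => -> _; rewrite sq_diag eqxx /=; lia.
  case: (entry_cases i j) => [|[]] A_ij; rewrite A_ij /=.
  - by rewrite sq_non 1?eq_sym //; lia.
  - by rewrite sq_pos //; lia.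
  - by rewrite sq_neg //; lia.
under eq_bigr do rewrite sq_row.
rewrite !big_split /= -!mulr_sumr !sum_indicator.
by rewrite (_ : [set j | j == i] = [set i]) ?cards1 ?mulr1 //; apply/setP => j; rewrite !inE.
Qed.

End SignedGraph.

Theorem lemma3p6 (T : finType) (A : T -> T -> int) (n : nat) (a b c : int) :
  signed_graph A ->
  SRSG A n 5 a b c ->
  (class_C1 A a b c \/ class_C4 A a b c \/ class_C5 A a b c) ->
  sg_connected A ->
  ~ complete A ->
  regular A 5 ->
  net_regular A 1 ->
  (a, b) = (2, 0) ->
  (4 %| n)%N.
Proof.
move=> sgA srsg _ _ _ reg net_reg [a_eq b_eq].
have card_T : #|T| = n by case: srsg.
have [i _ | T_empty] := pickP T; last by rewrite -card_T eq_card0.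
have [pos_i neg_i] : pos_degree A i = 3%N /\ neg_degree A i = 2%N.
  have := degree_pos_neg A sgA i; have := net_reg i.
  by rewrite reg /net_degree -/(pos_degree A i) -/(neg_degree A i); lia.
have c_non : c * #|non_neighbours A i|%:Z = -10.
  have := sum_sq_row_SRSG A sgA i srsg.
  by rewrite (sum_sq_net_regular A sgA i net_reg) pos_i neg_i a_eq b_eq; lia.
have n_eq : n = (#|non_neighbours A i| + 6)%N.
  by have := card_non_neighbours A sgA i; rewrite reg card_T; lia.
rewrite n_eq; apply: four_dvd_of_even_divisor_10 c_non _.
by have := handshake A sgA reg; rewrite card_T n_eq oddM oddD addbF.
Qed.
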